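(* Let $T=(V,E)$ be a temporal bipartite graph, let $\tau>0$, let $i\in\{1,\dots,6\}$ and let $p\in(0,1)$. Let $\widehat{C}_i$ be the estimator produced by either \texttt{TBC-E} or \texttt{TBC-N} (both with sampling probability $p$), as described in the context. Then $\mathbb{E}[\widehat{C}_i]=C_i$ and $\operatorname{Var}[\widehat{C}_i]\le \frac{1-p}{p}\,C_i^2$.
   Context: A temporal bipartite graph $T=(V,E)$ has node set $V=U\cup L$ with $U\cap L=\emptyset$ and a finite (multi)set $E\subseteq U\times L\times\mathbb{R}^+$ of temporal edges $(u,l,t)$ (several edges may join the same pair $u,l$ at different times); $m=|E|$. A temporal butterfly $B_i$ ($i=1,\dots,6$) is the butterfly on nodes $u'_1,u'_2\in U$-side and $l'_1,l'_2\in L$-side with edges $(u'_1,l'_1),(u'_2,l'_1),(u'_1,l'_2),(u'_2,l'_2)$ together with an ordering $\sigma_i$ of these four edges; $\sigma_1,\dots,\sigma_6$ are the six orderings in which $(u'_1,l'_1)$ comes first (a fixed enumeration of the permutations of the remaining three edges). Given $\tau>0$, a set $S$ of four temporal edges $\{(u_x,l_x,t_1),(u_y,l_x,t_2),(u_x,l_y,t_3),(u_y,l_y,t_4)\}$ of $T$ with $u_x\ne u_y\in U$, $l_x\ne l_y\in L$ is a $\tau$-instance of $B_i$ if, under the map $u_x\mapsto u'_1,u_y\mapsto u'_2,l_x\mapsto l'_1,l_y\mapsto l'_2$, the order of the four edges by timestamp matches $\sigma_i$ (so $(u_x,l_x,t_1)$ has the smallest timestamp), and $\max_{j\in\{2,3,4\}}t_j-t_1\le\tau$.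 $C_i$ denotes the number of $\tau$-instances of $B_i$ in $T$, and for an edge $e\in E$, $C_i(e)$ denotes the number of $\tau$-instances of $B_i$ whose first (smallest-timestamp) edge is $e$, so that $\sum_{e\in E}C_i(e)=C_i$. Algorithm \texttt{TBC-E}: each edge $e\in E$ is put into a sample $\widehat{E}$ independently with probability $p$, and the output is $\widehat{C}_i=\sum_{e\in\widehat{E}}C_i(e)/p$. Algorithm \texttt{TBC-N}: each node $u\in U$ is put into a sample $\widehat{U}$ independently with probability $p$ (the same construction may alternatively be applied to $L$), $\widehat{E}$ is the set of all edges incident to a node of $\widehat{U}$, and the output is $\widehat{C}_i=\sum_{e\in\widehat{E}}C_i(e)/p$. *)

From mathcomp Require Import all_boot all_order all_algebra.
Set Implicit Arguments. Unset Strict Implicit. Unset Printing Implicit Defensive.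
Import Order.TTheory GRing.Theory Num.Theory.
Local Open Scope ring_scope.

(* Positions of the four butterfly edges:
   0 = (u'1,l'1), 1 = (u'2,l'1), 2 = (u'1,l'2), 3 = (u'2,l'2).
   sigma i (i : 'I_6, standing for B_(i+1)) lists the positions in increasing
   time order; position 0 always comes first. *)
Definition sigma (i : 'I_6) : seq nat :=
  nth [::] [:: [:: 0; 1; 2; 3]%N; [:: 0; 1; 3; 2]%N; [:: 0; 2; 1; 3]%N;
               [:: 0; 2; 3; 1]%N; [:: 0; 3; 1; 2]%N; [:: 0; 3; 2; 1]%N] i.

Section TemporalButterflies.
Variables (R : realFieldType) (U L E : finType)
          (src : E -> U) (dst : E -> L) (time : E -> R) (tau : R).

(* (e1,e2,e3,e4) = ((u_x,l_x,t1),(u_y,l_x,t2),(u_x,l_y,t3),(u_y,l_y,t4)) is a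
   tau-instance of B_i. *)
Definition butterfly_tuple (i : 'I_6) (e1 e2 e3 e4 : E) : bool :=
  [&& src e1 == src e3, src e2 == src e4, src e1 != src e2,
      dst e1 == dst e2, dst e3 == dst e4, dst e1 != dst e3,
      sorted <%R [seq nth 0 [:: time e1; time e2; time e3; time e4] k
                 | k <- sigma i] &
      Num.max (time e2) (Num.max (time e3) (time e4)) - time e1 <= tau].

Definition is_instance (i : 'I_6) (S : {set E}) : bool :=
  [exists e1 : E, exists e2 : E, exists e3 : E, exists e4 : E,
     (S == [set e1; e2; e3; e4]) && butterfly_tuple i e1 e2 e3 e4].

Definition count_C (i : 'I_6) : nat := #|[set S : {set E} | is_instance i S]|.

Definition count_Ce (i : 'I_6) (e : E) : nat :=
  #|[set S : {set E} | [&& is_instance i S, e \in S &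
                           [forall f in S, time e <= time f]]]|.

Definition est_E (i : 'I_6) (p : R) (S : {set E}) : R :=
  (\sum_(e in S) (count_Ce i e)%:R) / p.

Definition est_NU (i : 'I_6) (p : R) (S : {set U}) : R :=
  (\sum_(e in [set e : E | src e \in S]) (count_Ce i e)%:R) / p.

Definition est_NL (i : 'I_6) (p : R) (S : {set L}) : R :=
  (\sum_(e in [set e : E | dst e \in S]) (count_Ce i e)%:R) / p.

End TemporalButterflies.

(* Expectation of f(S) where S contains each element of X independently
   with probability p. *)
Definition bexp (R : realFieldType) (X : finType) (p : R) (f : {set X} -> R) : R :=
  \sum_(S : {set X}) p ^+ #|S| * (1 - p) ^+ (#|X| - #|S|)%N * f S.

Definition bvar (R : realFieldType) (X : finType) (p : R) (f : {set X} -> R) : R :=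
  bexp p (fun S => (f S - bexp p f) ^+ 2).

(* Every tau-instance of B_i has a unique edge of smallest timestamp, so
   C_i = sum_e C_i(e).  TBC-E is therefore the Horvitz-Thompson estimator
   (sum_(e in S) w e) / p of sum_e w e for a Bernoulli(p) edge sample S, with
   w e = C_i(e).  Since E[1_x 1_y] is p for x = y and p^2 otherwise, this
   estimator is unbiased with variance (1 - p) / p * sum_e w e ^ 2, which is at
   most (1 - p) / p * (sum_e w e) ^ 2 because the weights are nonnegative.
   TBC-N is the same estimator over a node sample, with the weight of a node
   being the sum of C_i(e) over its incident edges. *)

From mathcomp Require Import all_boot all_order all_algebra.
From mathcomp Require Import ring.
Set Implicit Arguments. Unset Strict Implicit. Unset Printing Implicit Defensive.
Import Order.TTheory GRing.Theory Num.Theory.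
Local Open Scope ring_scope.

Lemma sum_sqr_le_sqr_sum (R : numDomainType) (I : finType) (w : I -> R) :
  (forall x, 0 <= w x) -> \sum_x w x ^+ 2 <= (\sum_x w x) ^+ 2.
Proof.
move=> w_ge0; rewrite expr2 mulr_suml; apply: ler_sum => x _.
rewrite mulr_sumr (bigD1 x) //= expr2 lerDl.
by apply: sumr_ge0 => y _; apply: mulr_ge0.
Qed.

Lemma sum_set_prodE (R : comNzRingType) (X : finType) (h : X -> bool -> R) :
  \sum_(S : {set X}) \prod_x h x (x \in S) = \prod_x (h x true + h x false).
Proof.
under [RHS]eq_bigr => x _ do rewrite -(big_bool _ (h x)).
rewrite bigA_distr_bigA (reindex (fun f : {ffun X -> bool} => [set x | f x])) /=.
  by apply: eq_bigr => f _; apply: eq_bigr => x _; rewrite inE.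
exists (fun S : {set X} => [ffun x => x \in S]) => [f _|S _].
  by apply/ffunP => x; rewrite ffunE inE.
by apply/setP => x; rewrite inE ffunE.
Qed.

Section BernoulliSample.
Variables (R : realFieldType) (X : finType) (p : R).

Lemma bernoulli_weightE (S : {set X}) :
  p ^+ #|S| * (1 - p) ^+ (#|X| - #|S|)%N = \prod_x (if x \in S then p else 1 - p).
Proof.
rewrite (bigID (mem S)) /= (eq_bigr (fun _ => p)); last by move=> x ->.
rewrite [X in _ = _ * X](eq_bigr (fun _ => 1 - p)); last by move=> x /negbTE ->.
rewrite !prodr_const -(cardsC S) addKn; congr (_ ^+ _ * _ ^+ _).
by apply: eq_card => x; rewrite !inE.
Qed.

Lemma eq_bexp (f g : {set X} -> R) : f =1 g -> bexp p f = bexp p g.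
Proof. by move=> fg; apply: eq_bigr => S _; rewrite fg. Qed.

Lemma eq_bvar (f g : {set X} -> R) : f =1 g -> bvar p f = bvar p g.
Proof. by move=> fg; rewrite /bvar (eq_bexp fg); apply: eq_bexp => S; rewrite fg. Qed.

Lemma bexpD (f g : {set X} -> R) :
  bexp p (fun S => f S + g S) = bexp p f + bexp p g.
Proof. by rewrite /bexp -big_split; apply: eq_bigr => S _; rewrite mulrDr. Qed.

Lemma bexpZ (c : R) (f : {set X} -> R) : bexp p (fun S => c * f S) = c * bexp p f.
Proof. by rewrite /bexp mulr_sumr; apply: eq_bigr => S _; rewrite mulrCA. Qed.

Lemma bexp_sum (I : finType) (g : I -> {set X} -> R) :
  bexp p (fun S => \sum_i g i S) = \sum_i bexp p (g i).
Proof.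
rewrite /bexp; under eq_bigr => S _ do rewrite mulr_sumr.
by rewrite exchange_big.
Qed.

Lemma bexp_prod_in (A : {set X}) :
  bexp p (fun S => \prod_(x in A) (x \in S)%:R) = p ^+ #|A|.
Proof.
rewrite /bexp.
under eq_bigr => S _ do rewrite bernoulli_weightE [X in _ * X]big_mkcond -big_split /=.
rewrite (sum_set_prodE (fun x b => (if b then p else 1 - p) * (if x \in A then b%:R else 1))).
rewrite -prodr_const [RHS]big_mkcond /=; apply: eq_bigr => x _.
by case: (x \in A); rewrite /= ?mulr1 ?mulr0 ?addr0 //; ring.
Qed.

Lemma bexp_cst (c : R) : bexp p (fun _ : {set X} => c) = c.
Proof.
have oneE (S : {set X}) : c = c * \prod_(x in set0) (x \in S)%:R.
  by rewrite big_set0 mulr1.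
by rewrite (eq_bexp oneE) bexpZ bexp_prod_in cards0 mulr1.
Qed.

Lemma bexp_in (x : X) : bexp p (fun S => (x \in S)%:R) = p.
Proof.
have inE1 (S : {set X}) : (x \in S)%:R = \prod_(z in [set x]) (z \in S)%:R :> R.
  by rewrite big_set1.
by rewrite (eq_bexp inE1) bexp_prod_in cards1.
Qed.

Lemma bexp_in2 (x y : X) :
  bexp p (fun S => (x \in S)%:R * (y \in S)%:R) = if x == y then p else p ^+ 2.
Proof.
have [<-|neq_xy] := eqVneq x y.
  by under eq_bexp => S do rewrite -natrM mulnb andbb; rewrite bexp_in.
have in2E (S : {set X}) :
    (x \in S)%:R * (y \in S)%:R = \prod_(z in [set x; y]) (z \in S)%:R :> R.
  by rewrite big_setU1 ?inE // big_set1.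
by rewrite (eq_bexp in2E) bexp_prod_in cards2 neq_xy.
Qed.

Lemma bvarE (f : {set X} -> R) :
  bvar p f = bexp p (fun S => f S ^+ 2) - bexp p f ^+ 2.
Proof.
set m := bexp p f.
have sqrE S : (f S - m) ^+ 2 = (f S ^+ 2 + (- 2 * m) * f S) + m ^+ 2 by ring.
rewrite /bvar -/m (eq_bexp sqrE) !bexpD bexpZ bexp_cst -/m; ring.
Qed.

Section HorvitzThompson.
Variable w : X -> R.

Definition ht_est (S : {set X}) : R := (\sum_(x in S) w x) / p.

Hypothesis p_neq0 : p != 0.

Lemma ht_estE S : ht_est S = \sum_x w x / p * (x \in S)%:R.
Proof.
rewrite /ht_est mulr_suml big_mkcond /=; apply: eq_bigr => x _.
by case: (x \in S); rewrite ?mulr1 ?mulr0 ?mul0r.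
Qed.

Lemma bexp_ht : bexp p ht_est = \sum_x w x.
Proof.
rewrite (eq_bexp ht_estE) bexp_sum; apply: eq_bigr => x _.
by rewrite bexpZ bexp_in divfK.
Qed.

Lemma bexp_ht_sqr :
  bexp p (fun S => ht_est S ^+ 2) = (\sum_x w x) ^+ 2 + (1 - p) / p * \sum_x w x ^+ 2.
Proof.
have sqrE S : ht_est S ^+ 2 =
    \sum_x \sum_y w x * w y / p ^+ 2 * ((x \in S)%:R * (y \in S)%:R).
  rewrite ht_estE expr2 mulr_suml; apply: eq_bigr => x _.
  by rewrite mulr_sumr; apply: eq_bigr => y _; field.
rewrite (eq_bexp sqrE) bexp_sum.
under eq_bigr => x _ do rewrite bexp_sum.
under eq_bigr => x _ do under eq_bigr => y _ do rewrite bexpZ bexp_in2.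
rewrite [(\sum_x w x) ^+ 2]expr2 mulr_suml mulr_sumr -big_split; apply: eq_bigr => x _ /=.
rewrite mulr_sumr (bigD1 x) //= [in RHS](bigD1 x) //= eqxx.
have p2_neq0 : p ^+ 2 != 0 by rewrite expf_neq0.
rewrite (eq_bigr (fun y => w x * w y)); first by field.
by move=> y /negbTE neq_yx; rewrite eq_sym neq_yx divfK.
Qed.

Lemma bvar_ht : bvar p ht_est = (1 - p) / p * \sum_x w x ^+ 2.
Proof. by rewrite bvarE bexp_ht_sqr bexp_ht addrAC subrr add0r. Qed.

End HorvitzThompson.

Lemma bvar_ht_le (w : X -> R) : 0 < p -> p <= 1 -> (forall x, 0 <= w x) ->
  bvar p (ht_est w) <= (1 - p) / p * (\sum_x w x) ^+ 2.
Proof.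
move=> p_gt0 p_le1 w_ge0; rewrite bvar_ht ?gt_eqF //.
apply: ler_wpM2l; last exact: sum_sqr_le_sqr_sum.
by apply: divr_ge0; [rewrite subr_ge0 | exact: ltW].
Qed.

End BernoulliSample.

Section Fibers.
Variables (R : nmodType) (E Y : finType) (h : E -> Y) (c : E -> R).

Definition fiber_sum (y : Y) : R := \sum_(e | h e == y) c e.

Lemma sum_fiber_sum : \sum_y fiber_sum y = \sum_e c e.
Proof. by rewrite [RHS](partition_big h predT). Qed.

Lemma sum_preimsetE (S : {set Y}) :
  \sum_(e in [set e | h e \in S]) c e = \sum_(y in S) fiber_sum y.
Proof.
rewrite (partition_big h (mem S)) /=; last by move=> e; rewrite inE.
apply: eq_bigr => y yS; apply: eq_bigl => e.
by rewrite inE; case: eqP => [->|]; rewrite ?yS ?andbF.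
Qed.

End Fibers.

Section FirstEdge.
Variables (R : realFieldType) (U L E : finType)
          (src : E -> U) (dst : E -> L) (time : E -> R) (tau : R).

Lemma butterfly_tuple_first i e1 e2 e3 e4 :
  butterfly_tuple src dst time tau i e1 e2 e3 e4 ->
  [/\ time e1 < time e2, time e1 < time e3 & time e1 < time e4].
Proof.
case/and5P => _ _ _ _ /and4P[_ _ + _].
case: i => [[|[|[|[|[|[|//]]]]]] _] /=; rewrite /sigma /= andbT;
  case/and3P => lt_1a lt_ab lt_bc; have lt_1b := lt_trans lt_1a lt_ab;
  by have lt_1c := lt_trans lt_1b lt_bc; split.
Qed.

Lemma instance_first_edge i S : is_instance src dst time tau i S ->
  exists e1, forall e, (e \in S) && [forall f in S, time e <= time f] = (e == e1).
Proof.
case/existsP => e1 /existsP[e2 /existsP[e3 /existsP[e4 /andP[/eqP-> /butterfly_tuple_first]]]].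
case=> lt12 lt13 lt14; exists e1 => e.
have e1_in : e1 \in [set e1; e2; e3; e4] by rewrite !inE eqxx.
apply/idP/eqP => [/andP[]|->]; last first.
  rewrite e1_in; apply/forall_inP => f; rewrite !inE -!orbA.
  by case/or4P => /eqP->; rewrite ?lexx ?ltW.
rewrite !inE -!orbA => /or4P[] /eqP-> // /forall_inP/(_ e1 e1_in).
all: by rewrite leNgt ?lt12 ?lt13 ?lt14.
Qed.

Lemma sum_count_Ce i :
  (\sum_e count_Ce src dst time tau i e)%N = count_C src dst time tau i.
Proof.
rewrite /count_Ce /count_C.
under eq_bigr => e _ do rewrite -sum1_card big_mkcond /=.
rewrite exchange_big /= -sum1_card [RHS]big_mkcond /=.
apply: eq_bigr => S _; rewrite inE.
have [inst_S|] := boolP (is_instance src dst time tau i S); last first.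
  by move=> /negbTE not_inst; apply: big1 => e _; rewrite inE not_inst.
have [e1 first_e1] := instance_first_edge inst_S.
under eq_bigr => e _ do rewrite inE inst_S /= first_e1.
by rewrite -big_mkcond big_pred1_eq.
Qed.

End FirstEdge.

Theorem theorem4p1 (R : realFieldType) (U L E : finType)
    (src : E -> U) (dst : E -> L) (time : E -> R) (tau : R)
    (i : 'I_6) (p : R) :
  (forall e, 0 < time e) -> 0 < tau -> 0 < p -> p < 1 ->
  let C := (count_C src dst time tau i)%:R : R in
  (* TBC-E *)
  (bexp p (est_E src dst time tau i p) = C /\
   bvar p (est_E src dst time tau i p) <= (1 - p) / p * C ^+ 2) /\
  (* TBC-N, node sample in U *)
  (bexp p (est_NU src dst time tau i p) = C /\
   bvar p (est_NU src dst time tau i p) <= (1 - p) / p * C ^+ 2) /\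
  (* TBC-N, node sample in L *)
  (bexp p (est_NL src dst time tau i p) = C /\
   bvar p (est_NL src dst time tau i p) <= (1 - p) / p * C ^+ 2).
Proof.
move=> _ _ p_gt0 p_lt1 C.
pose c e := (count_Ce src dst time tau i e)%:R : R.
have c_ge0 e : 0 <= c e by exact: ler0n.
have sum_c : \sum_e c e = C by rewrite -natr_sum sum_count_Ce.
have ht_spec (Y : finType) (w : Y -> R) : (forall y, 0 <= w y) -> \sum_y w y = C ->
    bexp p (ht_est p w) = C /\ bvar p (ht_est p w) <= (1 - p) / p * C ^+ 2.
  move=> w_ge0 <-; split; first by rewrite bexp_ht ?gt_eqF.
  by rewrite bvar_ht_le ?ltW.
have node_spec (Y : finType) (h : E -> Y) :
    let f (S : {set Y}) := (\sum_(e in [set e | h e \in S]) c e) / p in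
    bexp p f = C /\ bvar p f <= (1 - p) / p * C ^+ 2.
  move=> f; have fE : f =1 ht_est p (fiber_sum h c).
    by move=> S; rewrite /f sum_preimsetE.
  rewrite (eq_bexp _ fE) (eq_bvar _ fE); apply: ht_spec; last by rewrite sum_fiber_sum.
  by move=> y; apply: sumr_ge0 => e _.
split; first exact: ht_spec c_ge0 sum_c.
by split; apply: node_spec.
Qed.
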